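(* Let $v,\Omega:[0,\infty)\to\mathbb{R}^3$ be continuous, uniformly bounded signals, and let $(R,x)$ solve $\dot x=Rv$, $\dot R=R\Omega_\times$, with $X=\mathcal{T}(R,x)$. Let $X_e=\mathcal{T}(Q,\xi)$ solve $\dot X_e=X_eU^\vee$ with $U^\vee=\begin{pmatrix}\Omega_\times&v\\0&0\end{pmatrix}$ and arbitrary $X_e(0)\in SE(3)$. Let $X_c=\mathcal{T}(Q_c,\xi_c)\in SE(3)$ be the constant matrix with $X_e(t)=X_cX(t)$ for all $t\ge0$, namely $X_c=X_e(0)X(0)^{-1}$. Let $z_1,\dots,z_n\in\mathbb{R}^3$ be constant landmark positions with $z_i\neq x(t)$ for all $t\ge0$ and all $i$. Define $$z_i^v(t):=\xi(t)+Q(t)R(t)^\top\big(z_i-x(t)\big),$$ $$y_i(t):=R(t)^\top\frac{z_i-x(t)}{|z_i-x(t)|},\qquad y_i^v(t):=Q(t)^\top\frac{z_i^v(t)-\xi(t)}{|z_i^v(t)-\xi(t)|}.$$ Then for every $i\in\{1,\dots,n\}$: 1) $z_i^v(t)=\xi_c+Q_cz_i$ for all $t\ge0$; in particular $z_i^v$ is constant. 2) $y_i^v(t)=y_i(t)$ for all $t\ge0$.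
   Context: For $a\in\mathbb{R}^3$, $a_\times$ denotes the skew-symmetric matrix with $a_\times b=a\times b$. We write $$\mathcal{T}(R,x)=\begin{pmatrix}R&x\\0&1\end{pmatrix}\in SE(3),\qquad R\in SO(3),\ x\in\mathbb{R}^3.$$ $|\cdot|$ is the Euclidean norm. *)

From HB Require Import structures.
From mathcomp Require Import all_boot all_order all_algebra.
From mathcomp Require Import all_classical all_reals all_analysis.
Set Implicit Arguments. Unset Strict Implicit. Unset Printing Implicit Defensive.
Import Order.TTheory GRing.Theory Num.Theory numFieldNormedType.Exports.
Local Open Scope ring_scope.

Section defs.
Variable R : realType.

Definition vnorm (w : 'cV[R]_3) : R := Num.sqrt (\sum_(i < 3) w i ord0 ^+ 2).

(* a_x : crossmx-symmetric matrix with a_x b = a x b *)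
Definition crossmx (a : 'cV[R]_3) : 'M[R]_3 :=
  let a1 := a (@Ordinal 3 0 erefl) ord0 in
  let a2 := a (@Ordinal 3 1 erefl) ord0 in
  let a3 := a (@Ordinal 3 2 erefl) ord0 in
  \matrix_(i < 3, j < 3)
    nth 0 (nth [::] [:: [:: 0; - a3; a2];
                       [:: a3; 0; - a1];
                       [:: - a2; a1; 0]] i) j.

Definition SO3 (M : 'M[R]_3) : Prop := M^T *m M = 1%:M /\ \det M = 1.

Definition Tmx (M : 'M[R]_3) (x : 'cV[R]_3) : 'M[R]_(3 + 1) :=
  block_mx M x 0 1%:M.

Definition Uvee (Om v : 'cV[R]_3) : 'M[R]_(3 + 1) :=
  block_mx (crossmx Om) v 0 0.

Definition bounded_signal (s : R -> 'cV[R]_3) : Prop :=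
  exists M : R, forall t, 0 <= t -> vnorm (s t) <= M.

End defs.

From HB Require Import structures.
From mathcomp Require Import all_boot all_order all_algebra.
From mathcomp Require Import all_classical all_reals all_analysis.
Import Order.TTheory GRing.Theory Num.Theory numFieldNormedType.Exports.
Local Open Scope ring_scope.
Local Open Scope classical_set_scope.

(* The virtual landmark [xi + Q R^T (z - x)] has zero derivative: both attitudes
   are driven by the same angular velocity, so [(Q R^T)' = Q (W + W^T) R^T = 0]
   for the skew matrix [W = Om_x], and the translational terms [Q v] and
   [- Q R^T R v] cancel.  By continuity at [0] and the mean value theorem it
   equals its initial value [xi_c + Q_c z], read off [X_c = X_e(0) X(0)^-1].
   The bearings agree because [zv - xi = (Q R^T) (z - x)] with [Q R^T]
   orthogonal, so normalising commutes with it and [Q^T (Q R^T) = R^T]. *)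

Section matrix_calculus.
Local Set Implicit Arguments.
Local Unset Strict Implicit.
Context {R : realType}.

Lemma continuous_mxP (T : topologicalType) m n (F : T -> 'M[R]_(m, n)) :
  continuous F <-> forall i j, continuous (fun s => F s i j).
Proof.
split=> [cF i j s | cFij s].
  exact: continuous_comp (cF s) (@coord_continuous R m n i j (F s)).
apply/cvgrPdist_le => e e0.
have : \forall y \near s, forall i j, `|F s i j - F y i j| <= e.
  apply: filter_forall => i; apply: filter_forall => j.
  exact: (cvgrPdist_le _ _).1 (cFij i j s) e e0.
apply: filterS => y Fy.
rewrite /Num.Def.normr /= mx_normrE (bigmax_le _ (ltW e0)) //= => -[i j] _.
by rewrite !mxE.
Qed.

Lemma continuous_mulmx (T : topologicalType) m n p
    (A : T -> 'M[R]_(m, n)) (B : T -> 'M[R]_(n, p)) :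
  continuous A -> continuous B -> continuous (fun s => A s *m B s).
Proof.
move=> /continuous_mxP cA /continuous_mxP cB; apply/continuous_mxP => i j.
under eq_fun do rewrite mxE.
apply: (@continuous_big _ _ +%R 0 xpredT add_continuous) => k _ s.
by apply: continuousM; [exact: cA | exact: cB].
Qed.

Lemma continuous_trmx m n : continuous (@trmx R m n).
Proof.
apply/continuous_mxP => i j; under eq_fun do rewrite !mxE.
exact: coord_continuous.
Qed.

Lemma continuous_ulsubmx m1 m2 n1 n2 :
  continuous (@ulsubmx R m1 m2 n1 n2).
Proof.
apply/continuous_mxP => i j; under eq_fun do rewrite !mxE.
exact: coord_continuous.
Qed.

Lemma continuous_ursubmx m1 m2 n1 n2 :
  continuous (@ursubmx R m1 m2 n1 n2).
Proof.
apply/continuous_mxP => i j; under eq_fun do rewrite !mxE.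
exact: coord_continuous.
Qed.

Lemma is_derive_mxP {V : normedModType R} m n (M : V -> 'M[R]_(m, n))
    (x v : V) (D : 'M[R]_(m, n)) :
  is_derive x v M D <-> forall i j, is_derive x v (fun y => M y i j) (D i j).
Proof.
split=> [[dM <-] i j | dMij].
  have /derivable_mxP/(_ i j) dij := dM.
  by apply: DeriveDef => //; rewrite derive_mx // mxE.
have dM : derivable M x v by apply/derivable_mxP => i j; case: (dMij i j).
apply: DeriveDef => //; rewrite derive_mx //; apply/matrixP => i j.
by rewrite mxE; case: (dMij i j).
Qed.

Lemma is_derive_mulmx {V : normedModType R} m n p
    (A : V -> 'M[R]_(m, n)) (B : V -> 'M[R]_(n, p)) (x v : V) dA dB :
  is_derive x v A dA -> is_derive x v B dB ->
  is_derive x v (fun y => A y *m B y) (dA *m B x + A x *m dB).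
Proof.
move=> /is_derive_mxP dAij /is_derive_mxP dBij; apply/is_derive_mxP => i j.
rewrite !mxE -big_split /=.
under eq_fun do rewrite mxE.
have -> : (fun y => \sum_k A y i k * B y k j) =
          \sum_k (fun y => A y i k * B y k j).
  by apply/funext => y; rewrite fct_sumE.
apply: is_derive_sum => k.
apply: is_derive_eq (is_deriveM (dAij i k) (dBij k j)) _.
by rewrite addrC; congr (_ + _); exact: mulrC.
Qed.

Lemma is_derive_trmx {V : normedModType R} m n (A : V -> 'M[R]_(m, n))
    (x v : V) dA :
  is_derive x v A dA -> is_derive x v (fun y => (A y)^T) dA^T.
Proof.
move=> /is_derive_mxP dAij; apply/is_derive_mxP => i j; rewrite !mxE.
by under eq_fun do rewrite !mxE.
Qed.

Lemma is_derive_ulsubmx {V : normedModType R} m1 m2 n1 n2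
    (A : V -> 'M[R]_(m1 + m2, n1 + n2)) (x v : V) dA :
  is_derive x v A dA -> is_derive x v (fun y => ulsubmx (A y)) (ulsubmx dA).
Proof.
move=> /is_derive_mxP dAij; apply/is_derive_mxP => i j; rewrite !mxE.
by under eq_fun do rewrite !mxE.
Qed.

Lemma is_derive_ursubmx {V : normedModType R} m1 m2 n1 n2
    (A : V -> 'M[R]_(m1 + m2, n1 + n2)) (x v : V) dA :
  is_derive x v A dA -> is_derive x v (fun y => ursubmx (A y)) (ursubmx dA).
Proof.
move=> /is_derive_mxP dAij; apply/is_derive_mxP => i j; rewrite !mxE.
by under eq_fun do rewrite !mxE.
Qed.

Lemma is_derive0_mx_cst m n (F : R -> 'M[R]_(m, n)) (a b : R) : a <= b ->
  {within `[a, b], continuous F} ->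
  (forall t, t \in `]a, b[%R -> is_derive t 1 F 0) -> F b = F a.
Proof.
move=> ab /continuous_mxP cF dF; apply/matrixP => i j; apply/eqP.
have dFij t : t \in `]a, b[%R -> is_derive t 1 (fun s => F s i j) 0.
  by move=> /dF /is_derive_mxP /(_ i j); rewrite mxE.
have [c _] := MVT_segment ab dFij (cF i j).
by rewrite mul0r => /eqP; rewrite subr_eq0.
Qed.

End matrix_calculus.

Section se3_kinematics.
Local Set Implicit Arguments.
Local Unset Strict Implicit.
Context {R : realType}.

Lemma crossmx_skew (a : 'cV[R]_3) : (crossmx a)^T = - crossmx a.
Proof.
apply/matrixP => i j; rewrite !mxE.
by case: i => [[|[|[|i]]]] ? //=; case: j => [[|[|[|j]]]] ? //=;
  rewrite ?opprK ?oppr0.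
Qed.

Lemma vnorm_orthogonal (M : 'M[R]_3) (w : 'cV[R]_3) : M^T *m M = 1%:M ->
  vnorm (M *m w) = vnorm w.
Proof.
have vnormE u : vnorm u = Num.sqrt ((u^T *m u) ord0 ord0).
  rewrite /vnorm mxE; congr Num.sqrt.
  by apply: eq_bigr => k _; rewrite mxE expr2.
by move=> MM; rewrite !vnormE trmx_mul -mulmxA (mulmxA M^T) MM mul1mx.
Qed.

Lemma mulmx_Tmx (A B : 'M[R]_3) (a b : 'cV[R]_3) :
  Tmx A a *m Tmx B b = Tmx (A *m B) (A *m b + a).
Proof.
by rewrite /Tmx mulmx_block !mulmx0 !mul0mx !mulmx1 !addr0 add0r.
Qed.

Lemma invmx_Tmx (M : 'M[R]_3) (x : 'cV[R]_3) : M^T *m M = 1%:M ->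
  invmx (Tmx M x) = Tmx M^T (- (M^T *m x)).
Proof.
move=> /mulmx1C MM.
have TT : Tmx M x *m Tmx M^T (- (M^T *m x)) = 1%:M.
  by rewrite mulmx_Tmx MM mulmxN mulmxA MM mul1mx addNr /Tmx scalar_mx_block.
have [Tunit _] := mulmx1_unit TT.
by rewrite -[RHS]mul1mx -(mulVmx Tunit) -mulmxA TT mulmx1.
Qed.

Lemma Tmx_mul_Uvee (Q : 'M[R]_3) (xi w u : 'cV[R]_3) :
  Tmx Q xi *m Uvee w u = block_mx (Q *m crossmx w) (Q *m u) 0 0.
Proof. by rewrite /Tmx /Uvee mulmx_block !mulmx0 !addr0 !mul0mx. Qed.

Lemma is_derive_Tmx_Uvee (Q : R -> 'M[R]_3) (xi : R -> 'cV[R]_3)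
    (w u : 'cV[R]_3) (t : R) :
  is_derive t 1 (fun s => Tmx (Q s) (xi s)) (Tmx (Q t) (xi t) *m Uvee w u) ->
  is_derive t 1 Q (Q t *m crossmx w) /\ is_derive t 1 xi (Q t *m u).
Proof.
rewrite Tmx_mul_Uvee => dT; split.
- have := is_derive_ulsubmx dT; rewrite block_mxKul.
  by under eq_fun do rewrite /Tmx block_mxKul.
- have := is_derive_ursubmx dT; rewrite block_mxKur.
  by under eq_fun do rewrite /Tmx block_mxKur.
Qed.

Lemma is_derive_mul_trmx_skew n (P M : R -> 'M[R]_n) (A : 'M[R]_n) (t : R) :
  A^T = - A -> is_derive t 1 P (P t *m A) -> is_derive t 1 M (M t *m A) ->
  is_derive t 1 (fun s => P s *m (M s)^T) 0.
Proof.
move=> skewA dP dM.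
apply: is_derive_eq (is_derive_mulmx dP (is_derive_trmx dM)) _.
by rewrite trmx_mul skewA mulNmx mulmxN mulmxA addrN.
Qed.

Lemma is_derive_virtual_landmark (Q M : R -> 'M[R]_3) (xi x : R -> 'cV[R]_3)
    (w u z : 'cV[R]_3) (t : R) :
  (M t)^T *m M t = 1%:M ->
  is_derive t 1 Q (Q t *m crossmx w) -> is_derive t 1 xi (Q t *m u) ->
  is_derive t 1 M (M t *m crossmx w) -> is_derive t 1 x (M t *m u) ->
  is_derive t 1 (fun s => xi s + Q s *m (M s)^T *m (z - x s)) 0.
Proof.
move=> MM dQ dxi dM dx.
have dQM := is_derive_mul_trmx_skew (crossmx_skew w) dQ dM.
have dzx := is_deriveB (is_derive_cst z t 1) dx.
apply: is_derive_eq (is_deriveD dxi (is_derive_mulmx dQM dzx)) _.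
rewrite mul0mx add0r sub0r mulmxN -!mulmxA (mulmxA (M t)^T) MM mul1mx.
exact: addrN.
Qed.

End se3_kinematics.

Theorem lemma2 (R : realType) (v Om : R -> 'cV[R]_3)
  (Rt : R -> 'M[R]_3) (x : R -> 'cV[R]_3)
  (Q : R -> 'M[R]_3) (xi : R -> 'cV[R]_3)
  (n : nat) (z : 'I_n -> 'cV[R]_3) :
  (* continuous, uniformly bounded signals on [0, oo) *)
  {within [set t : R | 0 <= t], continuous v} -> {within [set t : R | 0 <= t], continuous Om} ->
  bounded_signal v -> bounded_signal Om ->
  (* (R, x) solves xdot = R v, Rdot = R Omega_x on [0, oo), with R in SO(3) *)
  (forall t : R, 0 <= t -> SO3 (Rt t)) ->
  {within [set t : R | 0 <= t], continuous Rt} -> {within [set t : R | 0 <= t], continuous x} ->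
  (forall t : R, 0 < t -> is_derive t (1 : R) x (Rt t *m v t)) ->
  (forall t : R, 0 < t -> is_derive t (1 : R) Rt (Rt t *m crossmx (Om t))) ->
  (* X_e = T(Q, xi) in SE(3) solves X_e dot = X_e U^vee on [0, oo) *)
  (forall t : R, 0 <= t -> SO3 (Q t)) ->
  {within [set t : R | 0 <= t], continuous (fun s => Tmx (Q s) (xi s))} ->
  (forall t : R, 0 < t -> is_derive t (1 : R) (fun s => Tmx (Q s) (xi s))
                        (Tmx (Q t) (xi t) *m Uvee (Om t) (v t))) ->
  (* landmarks never coincide with the vehicle position *)
  (forall i (t : R), 0 <= t -> z i != x t) ->
  let Xc := Tmx (Q 0) (xi 0) *m invmx (Tmx (Rt 0) (x 0)) in
  let Qc : 'M[R]_3 := ulsubmx Xc in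
  let xic : 'cV[R]_3 := ursubmx Xc in
  let zv i t := xi t + Q t *m (Rt t)^T *m (z i - x t) in
  let y i t := (Rt t)^T *m ((vnorm (z i - x t))^-1 *: (z i - x t)) in
  let yv i t := (Q t)^T *m ((vnorm (zv i t - xi t))^-1 *: (zv i t - xi t)) in
  forall i (t : R), 0 <= t -> zv i t = xic + Qc *m z i /\ yv i t = y i t.
Proof.
move=> _ _ _ _ SO3R cR cx dx dR SO3Q cT dT _ Xc Qc xic zv y yv i t t0.
have RR s : 0 <= s -> (Rt s)^T *m Rt s = 1%:M by case/SO3R.
have QQ s : 0 <= s -> (Q s)^T *m Q s = 1%:M by case/SO3Q.
have cQ : {within [set s | 0 <= s], continuous Q}.
  have -> : Q = ulsubmx \o (fun s => Tmx (Q s) (xi s)).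
    by apply/funext => s; rewrite /= /Tmx block_mxKul.
  by move=> s; apply: (continuous_comp (cT s)); exact: continuous_ulsubmx.
have cxi : {within [set s | 0 <= s], continuous xi}.
  have -> : xi = ursubmx \o (fun s => Tmx (Q s) (xi s)).
    by apply/funext => s; rewrite /= /Tmx block_mxKur.
  by move=> s; apply: (continuous_comp (cT s)); exact: continuous_ursubmx.
have czv : {within [set s | 0 <= s], continuous (zv i)}.
  have cRT : {within [set s | 0 <= s], continuous (fun s => (Rt s)^T)}.
    by move=> s; apply: (continuous_comp (cR s)); exact: continuous_trmx.
  have czx : {within [set s | 0 <= s], continuous (fun s => z i - x s)}.
    by move=> s; apply: cvgB; [exact: cvg_cst | exact: cx].
  move=> s; apply: cvgD; first exact: cxi.
  exact: continuous_mulmx (continuous_mulmx cQ cRT) czx s.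
have zv_cst : zv i t = zv i 0.
  apply: is_derive0_mx_cst t0 _ _.
    by apply: continuous_subspaceW czv => s /=; rewrite in_itv /= => /andP[].
  move=> s; rewrite in_itv /= => /andP[s0 _].
  have [dQ dxi] := is_derive_Tmx_Uvee (dT s s0).
  exact: is_derive_virtual_landmark (RR s (ltW s0)) dQ dxi (dR s s0) (dx s s0).
split.
  rewrite zv_cst /xic /Qc /Xc invmx_Tmx ?RR // mulmx_Tmx.
  rewrite /Tmx block_mxKul block_mxKur.
  by rewrite /zv mulmxBr mulmxN mulmxA addrCA [RHS]addrC [- _ + _]addrC.
rewrite /yv /y.
have -> : zv i t - xi t = Q t *m (Rt t)^T *m (z i - x t).
  by rewrite /zv addrC addKr.
rewrite vnorm_orthogonal; last first.
  by rewrite trmx_mul trmxK -mulmxA (mulmxA (Q t)^T) QQ // mul1mx mulmx1C ?RR.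
by rewrite !scalemxAr !mulmxA QQ // mul1mx.
Qed.
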